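(* Let $i<j$ be two consecutive $c$-positions in a word $u$ (i.e. $u$ has label $c$ at $i$ and $j$ and no $c$ strictly between them) with attributes $(x_i,y_i)$ and $(x_j,y_j)$, respectively. If $x_j > x_i$, then $r^u_j = r^u_i \mathsf{X}_c$.
   Context: $A$ is a finite alphabet. An $\mathsf{X}$-ranker is a nonempty word over $\{\mathsf{X}_a : a\in A\}$, evaluated on a word $w$ by: $\mathsf{X}_a(w)$ is the smallest $a$-position of $w$ and $r\mathsf{X}_a(w)$ is the smallest $a$-position greater than $r(w)$ (possibly undefined); $\mathsf{Y}$-rankers are defined symmetrically with ''previous $a$-position''. The attribute of position $i$ is $(x_i,y_i)$, with $x_i$ the length of a shortest $\mathsf{X}$-ranker reaching $i$ and $y_i$ the length of a shortest $\mathsf{Y}$-ranker reaching $i$. Let $R^u_i$ be the set of $\mathsf{X}$-rankers $r$ with $r(u)=i$ and $|r|=x_i$. The canonical $\mathsf{X}$-ranker $r^u_i\in R^u_i$ is defined by minimizing visited positions from right to left: $S_{x_i}=R^u_i$, and for $j<x_i$, letting $p_j$ be the minimal position of $u$ visited by the length-$j$ prefixes of rankers in $S_{j+1}$, $S_j$ consists of the rankers in $S_{j+1}$ whose length-$j$ prefix visits $p_j$; then $S_1=\{r^u_i\}$. *)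

From mathcomp Require Import all_boot.
Set Implicit Arguments. Unset Strict Implicit. Unset Printing Implicit Defensive.

(* Words over a finite alphabet A are [seq A]; positions are 0-indexed nats. *)

Definition at_pos (A : finType) (u : seq A) (k : nat) (a : A) : bool :=
  (k < size u) && (nth a u k == a).

Definition nextX (A : finType) (u : seq A) (a : A) (k : nat) : option nat :=
  let s := drop k u in
  let q := index a s in
  if q < size s then Some (k + q) else None.

Fixpoint evalX_from (A : finType) (u : seq A) (k : nat) (r : seq A) : option nat :=
  match r with
  | [::] => None
  | a :: r' =>
      match nextX u a k with
      | None => None
      | Some p => if r' is [::] then Some p else evalX_from u p.+1 r'
      end
  end.

(* r(u) for an X-ranker r (a nonempty word over {X_a}); the empty word is not
   a ranker and evaluates to None. X_a(u) = smallest a-position,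
   r X_a (u) = smallest a-position > r(u). *)
Definition evalX (A : finType) (u : seq A) (r : seq A) : option nat :=
  evalX_from u 0 r.

Definition Rset (A : finType) (u : seq A) (i : nat) (r : seq A) : Prop :=
  evalX u r = Some i /\ (forall r', evalX u r' = Some i -> size r <= size r').

(* [xattr u i n] : n = x_i, the length of a shortest X-ranker reaching i. *)
Definition xattr (A : finType) (u : seq A) (i n : nat) : Prop :=
  exists r, Rset u i r /\ size r = n.

Definition posX (A : finType) (u : seq A) (r : seq A) : nat := odflt 0 (evalX u r).

(* [Sset u i d] is S_{x_i - d}: S_{x_i} = R^u_i and S_j consists of the rankers
   of S_{j+1} whose length-j prefix visits the minimal position p_j visited by
   length-j prefixes of rankers in S_{j+1}. (All rankers in R^u_i have
   length x_i, so j = size r - d.) *)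
Fixpoint Sset (A : finType) (u : seq A) (i : nat) (d : nat) (r : seq A) : Prop :=
  match d with
  | 0 => Rset u i r
  | d'.+1 =>
      Sset u i d' r /\
      (forall r', Sset u i d' r' ->
         posX u (take (size r - d) r) <= posX u (take (size r' - d) r'))
  end.

(* [canonical u i r] : r is the canonical X-ranker r^u_i, i.e. S_1 = {r}. *)
Definition canonical (A : finType) (u : seq A) (i : nat) (r : seq A) : Prop :=
  Sset u i (size r).-1 r.

(* Since j is the first c-position after i, appending X_c to any ranker reaching i reaches j;
   conversely every ranker reaching j ends with X_c after a prefix reaching some position
   p >= i.  Hence x_j <= x_i + 1, so x_j = x_i + 1, and a shortest ranker for j is r X_c with
   |r| = x_i.  Minimising the position visited by the length-x_i prefix (it is always >= i and
   equals i for r^u_i X_c) singles out the r X_c with r in R^u_i, so S_{d+1} for j is the image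
   of S_d for i under appending X_c, and S_1 for j is {r^u_i X_c}. *)
From mathcomp Require Import all_boot zify.
Set Implicit Arguments. Unset Strict Implicit. Unset Printing Implicit Defensive.

Section Positions.
Variable A : finType.
Implicit Types (u s : seq A) (a b : A) (k p q : nat).

Lemma at_pos_drop u k q a : at_pos (drop k u) q a = at_pos u (k + q) a.
Proof. by rewrite /at_pos size_drop nth_drop ltn_subRL. Qed.

Lemma at_pos_label u p a b : at_pos u p a -> at_pos u p b -> a = b.
Proof.
by case/andP=> lt_pu /eqP <- /andP[_ /eqP <-]; rewrite (set_nth_default b a lt_pu).
Qed.

Lemma index_le_at_pos s q a : at_pos s q a -> index a s <= q.
Proof. by case/andP=> lt_qs /eqP {1}<-; rewrite index_nth. Qed.

Lemma at_pos_index s a : index a s < size s -> at_pos s (index a s) a.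
Proof. by move=> lt_is; rewrite /at_pos lt_is /= nth_index // -index_mem. Qed.

Lemma nextX_SomeP u a k p :
  nextX u a k = Some p <->
  [/\ k <= p, at_pos u p a & forall q, k <= q < p -> ~~ at_pos u q a].
Proof.
rewrite /nextX; set s := drop k u; split.
  case: ifP => // /at_pos_index; rewrite at_pos_drop => a_idx [<-].
  split=> [|//|q /andP[le_kq lt_q]]; first exact: leq_addr.
  apply/negP; rewrite -(subnKC le_kq) -at_pos_drop -/s => /index_le_at_pos; lia.
case=> le_kp a_p before_p.
have a_pk : at_pos s (p - k) a by rewrite at_pos_drop subnKC.
have le_idx := index_le_at_pos a_pk.
have lt_idx : index a s < size s by move: a_pk => /andP[]; lia.
rewrite lt_idx; congr Some; apply/eqP; rewrite eqn_leq; apply/andP; split; first lia.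
rewrite leqNgt; apply/negP => lt_p.
have := before_p (k + index a s).
by rewrite leq_addr lt_p -at_pos_drop at_pos_index // => /(_ isT).
Qed.

Lemma nextX_Some_gt u a k p q :
  nextX u a k = Some p -> at_pos u q a -> q < p -> q < k.
Proof.
case/nextX_SomeP=> _ _ before_p a_q lt_qp; rewrite ltnNge; apply/negP => le_kq.
by have := before_p q; rewrite le_kq lt_qp a_q => /(_ isT).
Qed.

End Positions.

Section Evaluation.
Variable A : finType.
Implicit Types (u s t r : seq A) (a : A) (k p q m : nat).

Lemma evalX_from_rcons u k t a : t != [::] ->
  evalX_from u k (rcons t a) = obind (fun q => nextX u a q.+1) (evalX_from u k t).
Proof.
elim: t k => [|b t IH] k // _ /=; case: (nextX u b k) => [p|] //.
by case: t IH => [|b' t] IH /=; [case: nextX | rewrite -IH].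
Qed.

Lemma evalX_from_last u k t a q : evalX_from u k (rcons t a) = Some q -> at_pos u q a.
Proof.
case: t => [|b t].
  by rewrite /=; case E: nextX => [p|] // [<-]; case/nextX_SomeP: E.
rewrite evalX_from_rcons //; case: evalX_from => [p|] //= E.
by case/nextX_SomeP: E.
Qed.

Lemma evalX_from_catl u k s t p : s != [::] ->
  evalX_from u k (s ++ t) = Some p -> exists q, evalX_from u k s = Some q.
Proof.
elim: s k p => [|b s IH] k p // _ /=; case: (nextX u b k) => [p0|] //.
by case: s IH => [|b' s] IH /=; [exists p0 | apply: IH].
Qed.

Lemma evalX_take u r p m :
  evalX u r = Some p -> 0 < m -> exists q, evalX u (take m r) = Some q.
Proof.
case: r => [//|a r] Er m_gt0; move: Er; rewrite /evalX -{1}(cat_take_drop m (a :: r)).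
apply: evalX_from_catl; rewrite -size_eq0 size_take /=; case: ifP; lia.
Qed.

Lemma evalX_take_label u r x0 m p :
  m < size r -> evalX u (take m.+1 r) = Some p -> at_pos u p (nth x0 r m).
Proof. by move=> lt_m; rewrite (take_nth x0 lt_m); apply: evalX_from_last. Qed.

Lemma posX_Some u s p : evalX u s = Some p -> posX u s = p.
Proof. by rewrite /posX => ->. Qed.

End Evaluation.

Section ShortestRankers.
Variable A : finType.
Implicit Types (u r : seq A) (i n m d : nat).

Lemma Rset_size u i r r' : Rset u i r -> Rset u i r' -> size r = size r'.
Proof. by move=> [Er min] [Er' min']; apply/eqP; rewrite eqn_leq min // min'. Qed.

Lemma Rset_size_gt0 u i r : Rset u i r -> 0 < size r.
Proof. by case: r => [[]|]. Qed.

Lemma xattr_Rset_size u i n r : xattr u i n -> Rset u i r -> size r = n.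
Proof. by case=> r0 [R0 <-] Rr; apply: Rset_size Rr R0. Qed.

Lemma Sset_Rset u i d r : Sset u i d r -> Rset u i r.
Proof. by elim: d => [|d IH] //= [/IH]. Qed.

Lemma Sset_posX_take u i d r r' m : Sset u i d r -> Sset u i d r' ->
  size r - d <= m -> posX u (take m r) = posX u (take m r').
Proof.
elim: d m => [|d IH] m /=.
  move=> Rr Rr'; rewrite subn0 => le_m.
  have le_m' : size r' <= m by rewrite -(Rset_size Rr Rr').
  by rewrite !take_oversize // (posX_Some Rr.1) (posX_Some Rr'.1).
move=> [Sr min] [Sr' min'] le_m.
have eq_size := Rset_size (Sset_Rset Sr) (Sset_Rset Sr').
case: (leqP (size r - d) m) => [|lt_m]; first exact: IH.
have -> : m = size r - d.+1 by lia.
move: (min r' Sr') (min' r Sr); rewrite -eq_size => le_rr' le_r'r.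
by apply/eqP; rewrite eqn_leq le_rr' le_r'r.
Qed.

Lemma canonical_uniq u i r r' : canonical u i r -> canonical u i r' -> r = r'.
Proof.
move=> Cr Cr'; have Rr := Sset_Rset Cr; have Rr' := Sset_Rset Cr'.
have eq_size := Rset_size Rr Rr'.
move: Cr'; rewrite /canonical -eq_size => Cr'.
case: r Rr Cr Cr' eq_size => [[//]|x0 r0] Rr Cr Cr' eq_size.
apply: (eq_from_nth (x0 := x0)) => // m lt_m.
have [p Ep] := evalX_take Rr.1 (ltn0Sn m).
have [p' Ep'] := evalX_take Rr'.1 (ltn0Sn m).
have eq_p : p = p'.
  rewrite -(posX_Some Ep) -(posX_Some Ep').
  by apply: (Sset_posX_take Cr Cr'); rewrite /= subSnn.
apply: at_pos_label (evalX_take_label x0 lt_m Ep) _.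
by rewrite eq_p; apply: evalX_take_label Ep'; rewrite -eq_size.
Qed.

End ShortestRankers.

Lemma take_rcons_subS (T : Type) (s : seq T) x d :
  take (size (rcons s x) - d.+1) (rcons s x) = take (size s - d) s.
Proof. by rewrite size_rcons subSS -cats1 takel_cat // leq_subr. Qed.

Section ConsecutiveOccurrences.
Variables (A : finType) (u : seq A) (c : A) (i j : nat).
Hypotheses (lt_ij : i < j) (c_i : at_pos u i c) (c_j : at_pos u j c).
Hypothesis no_c_between : forall k, i < k < j -> ~~ at_pos u k c.

Lemma nextX_between : nextX u c i.+1 = Some j.
Proof.
by apply/nextX_SomeP; split=> // q /andP[lt_iq lt_qj]; rewrite no_c_between ?lt_iq.
Qed.

Lemma evalX_rcons_between s : evalX u s = Some i -> evalX u (rcons s c) = Some j.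
Proof.
case: s => [//|a s] Es.
by rewrite /evalX evalX_from_rcons // -/(evalX u (a :: s)) Es /= nextX_between.
Qed.

Lemma evalX_to_j r : evalX u r = Some j ->
  exists s p, [/\ r = rcons s c, evalX u s = Some p & i <= p].
Proof.
case/lastP: r => [//|s a] Er.
have eq_ac := at_pos_label (evalX_from_last Er) c_j; subst a.
case: s Er => [|b s] Er.
  move: Er; rewrite /evalX /=; case E: nextX => [p|] // [eq_pj].
  by move: (nextX_Some_gt E c_i); rewrite eq_pj => /(_ lt_ij).
move: Er; rewrite /evalX evalX_from_rcons // -/(evalX u (b :: s)).
case Es: evalX => [p|] //= Ep.
by exists (b :: s), p; split=> //; apply: nextX_Some_gt Ep c_i lt_ij.
Qed.

Variables xi xj : nat.
Hypotheses (xattr_i : xattr u i xi) (xattr_j : xattr u j xj) (lt_xi_xj : xi < xj).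

Lemma xattr_succ : xj = xi.+1.
Proof.
case: xattr_i => r [[Er _] size_r]; case: xattr_j => rj [[_ min_j] size_rj].
apply/eqP; rewrite eqn_leq lt_xi_xj andbT -size_rj -size_r -(size_rcons r c).
exact/min_j/evalX_rcons_between.
Qed.

Lemma Rset_rcons s : Rset u i s -> Rset u j (rcons s c).
Proof.
move=> Rs; split; first exact: evalX_rcons_between Rs.1.
move=> r' Er'; case: xattr_j => rj [[_ min_j] size_rj].
by rewrite size_rcons (xattr_Rset_size xattr_i Rs) -xattr_succ -size_rj min_j.
Qed.

Lemma Rset_to_j r : Rset u j r ->
  exists s p, [/\ r = rcons s c, size s = xi, evalX u s = Some p & i <= p].
Proof.
move=> Rr; have [s [p [eq_r Es le_ip]]] := evalX_to_j Rr.1.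
exists s, p; split=> //; apply/succn_inj.
by rewrite -xattr_succ -(xattr_Rset_size xattr_j Rr) eq_r size_rcons.
Qed.

Lemma Sset1_rcons r : Sset u j 1 r <-> exists2 s, r = rcons s c & Rset u i s.
Proof.
split=> [[Rr min] | [s -> Rs]] /=.
  have [s [p [eq_r size_s Es le_ip]]] := Rset_to_j Rr.
  case: xattr_i => r0 [R0 size_r0].
  have := min _ (Rset_rcons R0); rewrite eq_r !take_rcons_subS !subn0 !take_size.
  rewrite (posX_Some Es) (posX_Some R0.1) => le_pi.
  have eq_p : p = i by apply/eqP; rewrite eqn_leq le_pi.
  exists s => //; split=> [|r' Er']; first by rewrite Es eq_p.
  by rewrite size_s -size_r0; apply: R0.2.
split=> [|r' Rr']; first exact: Rset_rcons.
have [s' [p [-> _ Es' le_ip]]] := Rset_to_j Rr'.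
by rewrite !take_rcons_subS !subn0 !take_size (posX_Some Rs.1) (posX_Some Es').
Qed.

Lemma Sset_succ_rcons d r : Sset u j d.+1 r <-> exists2 s, r = rcons s c & Sset u i d s.
Proof.
elim: d r => [|d IH] r; first exact: Sset1_rcons.
split=> [[/IH [s -> Ss] min] | [s -> [Ss min]]].
  exists s => //; split=> // s' Ss'.
  by have := min _ (proj2 (IH _) (ex_intro2 _ _ s' erefl Ss')); rewrite !take_rcons_subS.
split=> [|r' /IH [s' -> Ss']]; first by apply/IH; exists s.
by rewrite !take_rcons_subS; apply: min.
Qed.

End ConsecutiveOccurrences.

Theorem lemma6 (A : finType) (u : seq A) (c : A) (i j xi xj : nat) :
  i < j ->
  at_pos u i c -> at_pos u j c ->
  (forall k, i < k < j -> ~~ at_pos u k c) ->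
  xattr u i xi -> xattr u j xj -> xi < xj ->
  forall ri rj, canonical u i ri -> canonical u j rj -> rj = rcons ri c.
Proof.
move=> lt_ij c_i c_j no_c xattr_i xattr_j lt_x ri rj Ci Cj.
have size_ri := xattr_Rset_size xattr_i (Sset_Rset Ci).
have xi_gt0 : 0 < xi by rewrite -size_ri (Rset_size_gt0 (Sset_Rset Ci)).
have size_rj : size rj = (xi.-1).+2.
  rewrite (xattr_Rset_size xattr_j (Sset_Rset Cj)) prednK //.
  exact (xattr_succ lt_ij c_j no_c xattr_i xattr_j lt_x).
move: Cj; rewrite /canonical size_rj.
case/(Sset_succ_rcons lt_ij c_i c_j no_c xattr_i xattr_j lt_x) => s -> Cs.
congr rcons; apply: canonical_uniq _ Ci.
by rewrite /canonical (xattr_Rset_size xattr_i (Sset_Rset Cs)).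
Qed.
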